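(* In the setting of the context, let $\gamma^*\in(0,1)$ be the unique solution of $\sigma\gamma+mf\log(1-\gamma)=0$. If $\gamma\in(0,1)\setminus\{\gamma^*\}$, then there exists a number $\bar u_\gamma$ such that $\lim_{t\to+\infty}u_\gamma(x,t)=\bar u_\gamma$ for every $x\in[0,1)$.
   Context: Fix constants $\sigma>0$, $f>0$, $m>0$ with $\sigma>mf$. For $\gamma\in(0,1]$ let $u_\gamma$ be the unique (mild, in fact classical) solution of \[ \partial_tu_\gamma+\sigma x(1-x)\partial_xu_\gamma=\frac{mf}{\gamma}\big[u_\gamma(x+\gamma(1-x),t)-u_\gamma(x,t)\big]\ (0\le x\le1,\ t>0),\quad u_\gamma(x,0)=x. \] *)

From Stdlib Require Import Reals.
From Coquelicot Require Import Coquelicot.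
Open Scope R_scope.

Definition cont_within (D : R -> R -> Prop) (u : R -> R -> R) (x t : R) : Prop :=
  forall eps : R, 0 < eps -> exists delta : R, 0 < delta /\
    forall y s : R, D y s -> Rabs (y - x) < delta -> Rabs (s - t) < delta ->
      Rabs (u y s - u x t) < eps.

Definition Dclosed (x t : R) : Prop := 0 <= x <= 1 /\ 0 <= t.
Definition Dpos (x t : R) : Prop := 0 <= x <= 1 /\ 0 < t.

(* u is a classical solution of
     d_t u + sigma x (1-x) d_x u = (m f / gamma) [u(x + gamma(1-x), t) - u(x,t)]
   on 0 <= x <= 1, t > 0, with u(x,0) = x:
   u is continuous on [0,1] x [0,+oo), C^1 on [0,1] x (0,+oo) (partial
   derivatives ux, ut exist and are continuous up to x = 0, 1; at x = 0, 1 the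
   x-derivative is the continuous extension of the interior one), and the
   equation holds pointwise. *)
Definition classical_solution (sigma f m gamma : R) (u : R -> R -> R) : Prop :=
  (forall x, 0 <= x <= 1 -> u x 0 = x) /\
  (forall x t, Dclosed x t -> cont_within Dclosed u x t) /\
  exists ux ut : R -> R -> R,
    (forall x t, 0 < x < 1 -> 0 < t -> is_derive (fun y => u y t) x (ux x t)) /\
    (forall x t, Dpos x t -> is_derive (fun s => u x s) t (ut x t)) /\
    (forall x t, Dpos x t -> cont_within Dpos ux x t) /\
    (forall x t, Dpos x t -> cont_within Dpos ut x t) /\
    (forall x t, Dpos x t ->
       ut x t + sigma * x * (1 - x) * ux x t
       = m * f / gamma * (u (x + gamma * (1 - x)) t - u x t)).

From Stdlib Require Import Reals Lra Lia Psatz Classical ClassicalEpsilon.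
From Stdlib Require List.
From Coquelicot Require Import Coquelicot.
Open Scope R_scope.

(* Along the characteristics of the logistic flow [x' = sigma x (1 - x)] the equation reduces
   to the jump equation [d/dt u = c (u (x + gamma (1 - x)) - u x)], [c = m f / gamma], which
   obeys a comparison principle.  The jump multiplies [(1 - x)^p] by [(1 - gamma)^p] and the
   flow adds a rate of at most [sigma p], so for small [p] of sign opposite to
   [sigma + c ln (1 - gamma)] (positive exactly when [gamma < gamma*]) powers of [1 - x] are
   exponentially decaying supersolutions.  For [gamma > gamma*] ([p > 0]) this bounds
   [|1 - u(x,t)|] by [e^(-lam t) (1 - x)^p], so [u -> 1].  For [gamma < gamma*] ([p < 0]) it
   bounds the oscillation [|u(y,t) - u(x,t)|] by [e^(-lam t)] times a fixed function, so
   [d/dt u(0,t)] is integrable and every [u(x,t)] converges to the limit of [u(0,t)]. *)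

Lemma is_derive_eq (f : R -> R) (x l l' : R) : is_derive f x l -> l = l' -> is_derive f x l'.
Proof. intros H <-; exact H. Qed.

Lemma is_derive_Rmult (f g : R -> R) x df dg : is_derive f x df -> is_derive g x dg ->
  is_derive (fun r => f r * g r) x (df * g x + f x * dg).
Proof. intros Hf Hg. apply (is_derive_mult f g x df dg Hf Hg). intros; apply Rmult_comm. Qed.

Lemma is_derive_continuity_pt (f : R -> R) x l : is_derive f x l -> continuity_pt f x.
Proof.
  intros H. apply continuity_pt_filterlim.
  apply (ex_derive_continuous (K := R_AbsRing) (V := R_NormedModule)). now exists l.
Qed.

Lemma continuity_pt_ball (f : R -> R) x : continuity_pt f x ->
  forall eps, 0 < eps -> exists d, 0 < d /\ forall y, Rabs (y - x) < d -> Rabs (f y - f x) < eps.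
Proof.
  intros H eps He. destruct (H eps He) as [d [Hd Hy]]. exists d; split; auto.
  intros y Hyd. destruct (Req_dec y x) as [->|Hn].
  - rewrite Rminus_diag, Rabs_R0; auto.
  - apply Hy. split; [split; [exact I | auto] | exact Hyd].
Qed.

Lemma ball_continuity_pt (f : R -> R) x :
  (forall eps, 0 < eps -> exists d, 0 < d /\ forall y, Rabs (y - x) < d -> Rabs (f y - f x) < eps) ->
  continuity_pt f x.
Proof.
  intros H eps He. destruct (H eps He) as [d [Hd Hy]]. exists d; split; auto.
  intros y [_ Hyd]. exact (Hy y Hyd).
Qed.

Lemma exp_le_mono a b : a <= b -> exp a <= exp b.
Proof.
  intros H. destruct (Rle_lt_or_eq_dec _ _ H) as [H' | ->].
  - apply Rlt_le, exp_increasing, H'.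
  - apply Rle_refl.
Qed.

Definition clamp (a b r : R) := Rmin b (Rmax a r).

Lemma clamp_in a b r : a <= b -> a <= clamp a b r <= b.
Proof. intros. unfold clamp, Rmin, Rmax. repeat destruct Rle_dec; lra. Qed.

Lemma clamp_id a b r : a <= r <= b -> clamp a b r = r.
Proof. intros. unfold clamp, Rmin, Rmax. repeat destruct Rle_dec; lra. Qed.

Lemma clamp_lipschitz a b r s : a <= b -> Rabs (clamp a b r - clamp a b s) <= Rabs (r - s).
Proof.
  intros. unfold clamp, Rmin, Rmax.
  repeat destruct Rle_dec; unfold Rabs; repeat destruct Rcase_abs; lra.
Qed.

(* Continuity of the restriction of [f] to [[a, b]], phrased as continuity of [f] after
   clamping to [[a, b]], because [MVT_gen] asks for [continuity_pt] in the sense of [R]. *)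
Definition cont_on (f : R -> R) a b := forall s, continuity_pt (fun r => f (clamp a b r)) s.

Lemma cont_on_of_continuity_pt (f : R -> R) a b : a <= b ->
  (forall s, a <= s <= b -> continuity_pt f s) -> cont_on f a b.
Proof.
  intros Hab H s. apply ball_continuity_pt. intros eps He.
  destruct (continuity_pt_ball f _ (H _ (clamp_in a b s Hab)) eps He) as [d [Hd Hy]].
  exists d; split; auto. intros y Hyd. apply Hy.
  eapply Rle_lt_trans; [apply clamp_lipschitz; auto | exact Hyd].
Qed.

Lemma cont_on_subinterval (f : R -> R) a' a b : a' <= a <= b -> cont_on f a' b -> cont_on f a b.
Proof.
  intros Hab Hc s. apply ball_continuity_pt. intros eps He.
  destruct (continuity_pt_ball _ (clamp a b s) (Hc (clamp a b s)) eps He) as [d [Hd Hy]].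
  exists d; split; [exact Hd|]. intros y Hyd.
  assert (Hcl : forall r, clamp a' b (clamp a b r) = clamp a b r)
    by (intros r; apply clamp_id; pose proof (clamp_in a b r); lra).
  rewrite <- (Hcl y), <- (Hcl s). apply Hy.
  eapply Rle_lt_trans; [apply clamp_lipschitz; lra | exact Hyd].
Qed.

Lemma cont_on_plus f g a b : cont_on f a b -> cont_on g a b -> cont_on (fun r => f r + g r) a b.
Proof. intros H1 H2 s. exact (continuity_pt_plus _ _ s (H1 s) (H2 s)). Qed.

Lemma cont_on_minus f g a b : cont_on f a b -> cont_on g a b -> cont_on (fun r => f r - g r) a b.
Proof. intros H1 H2 s. exact (continuity_pt_minus _ _ s (H1 s) (H2 s)). Qed.

Lemma cont_on_mult f g a b : cont_on f a b -> cont_on g a b -> cont_on (fun r => f r * g r) a b.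
Proof. intros H1 H2 s. exact (continuity_pt_mult _ _ s (H1 s) (H2 s)). Qed.

Lemma cont_on_opp f a b : cont_on f a b -> cont_on (fun r => - f r) a b.
Proof. intros H s. exact (continuity_pt_opp _ s (H s)). Qed.

Lemma cont_on_const k a b : cont_on (fun _ => k) a b.
Proof. intros s. apply continuity_pt_const. intros x y; reflexivity. Qed.

Lemma le_of_is_derive_nonneg (f df : R -> R) a b : a <= b -> cont_on f a b ->
  (forall s, a < s < b -> is_derive f s (df s)) -> (forall s, a < s < b -> 0 <= df s) ->
  f a <= f b.
Proof.
  intros Hab Hc Hd Hpos.
  set (g := fun r => f (clamp a b r)).
  set (dg := fun s => if Rlt_dec a s then if Rlt_dec s b then df s else 0 else 0).
  destruct (MVT_gen g a b dg) as [c [Hc1 Hc2]].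
  - intros x Hx. rewrite Rmin_left in Hx by lra. rewrite Rmax_right in Hx by lra.
    unfold dg. destruct Rlt_dec; [|lra]. destruct Rlt_dec; [|lra].
    apply (is_derive_ext_loc f g); [|apply Hd; lra].
    apply (locally_interval _ x a b); simpl; try lra.
    intros y H1 H2. unfold g. rewrite clamp_id; lra.
  - intros x _. apply Hc.
  - unfold g in Hc2. rewrite !clamp_id in Hc2 by lra.
    assert (0 <= dg c) by (unfold dg; repeat destruct Rlt_dec; try lra; apply Hpos; lra).
    nra.
Qed.

Lemma eq_of_is_derive_0 (f : R -> R) a b : a <= b -> cont_on f a b ->
  (forall s, a < s < b -> is_derive f s 0) -> f a = f b.
Proof.
  intros Hab Hc Hd.
  assert (f a <= f b) by (apply (le_of_is_derive_nonneg f (fun _ => 0)); auto; intros; lra).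
  assert (- f a <= - f b); [|lra].
  apply (le_of_is_derive_nonneg (fun r => - f r) (fun _ => 0)); auto.
  - apply cont_on_opp, Hc.
  - intros s Hs. apply (is_derive_eq _ _ (opp 0)); [apply (is_derive_opp f), Hd, Hs |].
    unfold opp; simpl; ring.
  - intros; lra.
Qed.

Lemma Rabs_sub_le_of_between a b y : Rmin a b <= y <= Rmax a b -> Rabs (y - a) <= Rabs (b - a).
Proof. unfold Rmin, Rmax. repeat destruct Rle_dec; unfold Rabs; repeat destruct Rcase_abs; lra. Qed.

Lemma MVT_segment (g dg : R -> R) a b :
  (forall y, Rabs (y - a) <= Rabs (b - a) -> is_derive g y (dg y)) ->
  exists c, Rabs (c - a) <= Rabs (b - a) /\ g b - g a = dg c * (b - a).
Proof.
  intros H. destruct (MVT_gen g a b dg) as [c [Hc Heq]].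
  - intros y Hy. apply H, Rabs_sub_le_of_between; lra.
  - intros y Hy. eapply is_derive_continuity_pt. apply H, Rabs_sub_le_of_between, Hy.
  - exists c. split; [apply Rabs_sub_le_of_between, Hc | exact Heq].
Qed.

Section ChainRule.
Variables (g gx gt : R -> R -> R) (x0 s0 dl : R).
Hypothesis Hpartial : forall x t, Rabs (x - x0) < dl -> Rabs (t - s0) < dl ->
  is_derive (fun y => g y t) x (gx x t) /\ is_derive (fun r => g x r) t (gt x t).

Lemma increment_by_partials x1 t1 : Rabs (x1 - x0) < dl -> Rabs (t1 - s0) < dl ->
  exists xi tau, Rabs (xi - x0) <= Rabs (x1 - x0) /\ Rabs (tau - s0) <= Rabs (t1 - s0) /\
    g x1 t1 - g x0 s0 = gx xi t1 * (x1 - x0) + gt x0 tau * (t1 - s0).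
Proof.
  intros Hx1 Ht1.
  destruct (MVT_segment (fun y => g y t1) (fun y => gx y t1) x0 x1) as [xi [Hxi Exi]].
  { intros y Hy. apply (Hpartial y t1); lra. }
  destruct (MVT_segment (fun r => g x0 r) (fun r => gt x0 r) s0 t1) as [tau [Htau Etau]].
  { intros r Hr. apply (Hpartial x0 r); [|lra].
    rewrite Rminus_diag, Rabs_R0. eapply Rle_lt_trans; [apply Rabs_pos | exact Hx1]. }
  exists xi, tau. simpl in Exi, Etau. repeat split; auto. lra.
Qed.

Hypothesis Hdl : 0 < dl.
Hypothesis Hpartial_cont : forall eps, 0 < eps -> exists eta, 0 < eta /\
  forall x t, Rabs (x - x0) < eta -> Rabs (t - s0) < eta ->
    Rabs (gx x t - gx x0 s0) < eps /\ Rabs (gt x t - gt x0 s0) < eps.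

Lemma is_derive_along (X : R -> R) dX : X s0 = x0 -> is_derive X s0 dX ->
  is_derive (fun r => g (X r) r) s0 (gx x0 s0 * dX + gt x0 s0).
Proof.
  intros HX0 HX.
  set (A := gx x0 s0). set (B := gt x0 s0).
  apply is_derive_Reals. intros eps Heps.
  set (K := Rabs dX + Rabs A + 2).
  assert (HK : 0 < K) by (unfold K; pose proof (Rabs_pos dX); pose proof (Rabs_pos A); lra).
  assert (He1 : 0 < Rmin 1 (eps / (2 * K))) by (apply Rmin_pos; [lra | apply Rdiv_lt_0_compat; lra]).
  assert (He1K : Rmin 1 (eps / (2 * K)) * K <= eps / 2).
  { replace (eps / 2) with (eps / (2 * K) * K) by (field; lra).
    apply Rmult_le_compat_r; [lra | apply Rmin_r]. }
  pose proof (Rmin_l 1 (eps / (2 * K))).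
  set (e1 := Rmin 1 (eps / (2 * K))) in *.
  destruct (Hpartial_cont e1 He1) as [eta [Heta Hnear]].
  pose proof (Rmin_l eta dl). pose proof (Rmin_r eta dl).
  set (eta' := Rmin eta dl) in *.
  assert (Heta' : 0 < eta') by (apply Rmin_pos; lra).
  pose proof HX as HXR. apply is_derive_Reals in HXR.
  destruct (HXR e1 He1) as [d1 Hquot].
  destruct (continuity_pt_ball X s0 (is_derive_continuity_pt _ _ _ HX) eta' Heta') as [d2 [Hd2 HXnear]].
  assert (Hd : 0 < Rmin (Rmin d1 d2) eta') by (repeat apply Rmin_pos; try apply cond_pos; lra).
  exists (mkposreal _ Hd). intros h Hh0 Hh. simpl in Hh.
  pose proof (Rmin_l (Rmin d1 d2) eta'). pose proof (Rmin_r (Rmin d1 d2) eta').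
  pose proof (Rmin_l d1 d2). pose proof (Rmin_r d1 d2).
  set (X1 := X (s0 + h)).
  assert (HX1 : Rabs (X1 - x0) < eta') by (rewrite <- HX0; apply HXnear; ring_simplify (s0 + h - s0); lra).
  assert (Ht1 : Rabs (s0 + h - s0) < eta') by (ring_simplify (s0 + h - s0); lra).
  destruct (increment_by_partials X1 (s0 + h) ltac:(lra) ltac:(lra)) as [xi [tau [Hxi [Htau Einc]]]].
  destruct (Hnear xi (s0 + h)) as [Cx _]; try lra.
  destruct (Hnear x0 tau) as [_ Ct]; [rewrite Rminus_diag, Rabs_R0; lra | lra |].
  fold A in Cx. fold B in Ct.
  set (q := (X1 - x0) / h).
  assert (Hq : Rabs (q - dX) < e1).
  { unfold q, X1. rewrite <- HX0. apply Hquot; [exact Hh0 | lra]. }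
  assert (Hqb : Rabs q <= Rabs dX + 1).
  { replace q with ((q - dX) + dX) by ring. eapply Rle_trans; [apply Rabs_triang | lra]. }
  match goal with |- Rabs ?e < _ =>
    replace e with ((gx xi (s0 + h) - A) * q + A * (q - dX) + (gt x0 tau - B)) end.
  2:{ rewrite HX0. fold X1. rewrite Einc. unfold q. field. exact Hh0. }
  eapply Rle_lt_trans; [apply Rabs_triang|].
  eapply Rle_lt_trans; [apply Rplus_le_compat_r, Rabs_triang|].
  rewrite !Rabs_mult.
  assert (Rabs (gx xi (s0 + h) - A) * Rabs q <= e1 * (Rabs dX + 1))
    by (apply Rmult_le_compat; try apply Rabs_pos; lra).
  assert (Rabs A * Rabs (q - dX) <= Rabs A * e1) by (apply Rmult_le_compat_l; [apply Rabs_pos | lra]).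
  unfold K in He1K. nra.
Qed.
End ChainRule.

Lemma is_derive_root_neg_value (g : R -> R) l : is_derive g 0 l -> g 0 = 0 -> l <> 0 ->
  exists a, -1 < a < 1 /\ a * l < 0 /\ g a < 0.
Proof.
  intros Hd H0 Hl. apply is_derive_Reals in Hd.
  assert (Hl2 : 0 < Rabs l / 2) by (apply Rabs_pos_lt in Hl; lra).
  destruct (Hd _ Hl2) as [d Hquot].
  pose proof (cond_pos d).
  assert (Hh : 0 < Rmin (d / 2) (1 / 2)) by (apply Rmin_pos; lra).
  pose proof (Rmin_l (d / 2) (1 / 2)). pose proof (Rmin_r (d / 2) (1 / 2)).
  set (h := Rmin (d / 2) (1 / 2)) in *.
  set (a := if Rlt_dec 0 l then - h else h).
  assert (Ha : Rabs a = h /\ a * l < 0).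
  { unfold a. destruct Rlt_dec.
    - rewrite Rabs_Ropp, Rabs_pos_eq by lra. split; [reflexivity | nra].
    - rewrite Rabs_pos_eq by lra. split; [reflexivity | nra]. }
  destruct Ha as [Ha Hal].
  assert (Ha0 : a <> 0) by (intros E; rewrite E, Rabs_R0 in Ha; lra).
  specialize (Hquot a Ha0 ltac:(lra)). rewrite Rplus_0_l, H0, Rminus_0_r in Hquot.
  assert (Hq : 0 < g a / a * l).
  { apply Rabs_def2 in Hquot. destruct (Rlt_dec 0 l).
    - rewrite Rabs_pos_eq in Hquot by lra. nra.
    - rewrite Rabs_left in Hquot by lra. nra. }
  exists a. split; [pose proof (Rabs_def2 a 1 ltac:(lra)); lra | split; [exact Hal |]].
  replace (g a) with (g a / a * a) by (field; exact Ha0).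
  assert (0 < l * l) by nra. nra.
Qed.

Lemma exp_decay_lt K lam eps : 0 <= K -> 0 < lam -> 0 < eps ->
  exists M, forall t, M < t -> K * exp (- lam * t) < eps.
Proof.
  intros HK Hl He. exists ((ln (K + 1) - ln eps) / lam). intros t Ht.
  assert (Hexp : exp (- lam * t) < eps / (K + 1)).
  { replace (eps / (K + 1)) with (exp (ln eps - ln (K + 1))).
    - apply exp_increasing.
      apply Rmult_lt_compat_l with (r := lam) in Ht; [|exact Hl].
      replace (lam * ((ln (K + 1) - ln eps) / lam)) with (ln (K + 1) - ln eps) in Ht by (field; lra).
      lra.
    - unfold Rminus. rewrite exp_plus, exp_Ropp, !exp_ln by lra. field. lra. }
  pose proof (exp_pos (- lam * t)).
  apply Rle_lt_trans with ((K + 1) * exp (- lam * t)); [nra|].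
  replace eps with ((K + 1) * (eps / (K + 1))) by (field; lra).
  apply Rmult_lt_compat_l; lra.
Qed.

Lemma is_lim_of_exp_bound (g : R -> R) (l K lam : R) : 0 <= K -> 0 < lam ->
  (forall t, 0 <= t -> Rabs (g t - l) <= K * exp (- lam * t)) -> is_lim g p_infty l.
Proof.
  intros HK Hl Hb. apply is_lim_spec. intros eps. simpl.
  destruct (exp_decay_lt K lam eps HK Hl (cond_pos eps)) as [M HM].
  exists (Rmax M 0). intros t Ht. pose proof (Rmax_l M 0). pose proof (Rmax_r M 0).
  eapply Rle_lt_trans; [apply Hb | apply HM]; lra.
Qed.

(* [g - B/lam e^(-lam r)] increases and [g + B/lam e^(-lam r)] decreases, so the former
   converges to its supremum and the gap between them vanishes. *)
Lemma is_lim_of_deriv_exp_bound (g dg : R -> R) B lam : 0 <= B -> 0 < lam ->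
  (forall b, 0 <= b -> cont_on g 0 b) ->
  (forall r, 0 < r -> is_derive g r (dg r)) ->
  (forall r, 0 < r -> Rabs (dg r) <= B * exp (- lam * r)) ->
  exists l : R, is_lim g p_infty l.
Proof.
  intros HB Hlam Hc Hd Hbd.
  set (E := fun r => B / lam * exp (- lam * r)).
  assert (HE : forall r, is_derive E r (- B * exp (- lam * r))).
  { intros r. unfold E. auto_derive; [auto | field; lra]. }
  assert (HEc : forall a b, a <= b -> cont_on E a b).
  { intros a b Hab. apply cont_on_of_continuity_pt; [exact Hab|].
    intros s _. eapply is_derive_continuity_pt, HE. }
  assert (HE0 : forall r, 0 <= E r) by (intros r; unfold E; pose proof (exp_pos (- lam * r));
    apply Rmult_le_pos; [apply Rdiv_le_0_compat|]; lra).
  assert (Hlow : forall r1 r2, 0 <= r1 <= r2 -> g r1 - E r1 <= g r2 - E r2).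
  { intros r1 r2 Hr. apply (le_of_is_derive_nonneg (fun r => g r - E r)
      (fun r => dg r - - B * exp (- lam * r))); [lra | | |].
    - apply cont_on_minus; [apply (cont_on_subinterval g 0), Hc | apply HEc]; lra.
    - intros s Hs. apply (is_derive_minus g E); [apply Hd; lra | apply HE].
    - intros s Hs. pose proof (Hbd s ltac:(lra)) as Hs'. apply Rabs_le_between in Hs'. lra. }
  assert (Hupp : forall r1 r2, 0 <= r1 <= r2 -> g r2 + E r2 <= g r1 + E r1).
  { intros r1 r2 Hr. assert (- (g r1 + E r1) <= - (g r2 + E r2)); [|lra].
    apply (le_of_is_derive_nonneg (fun r => - (g r + E r))
      (fun r => - (dg r + - B * exp (- lam * r)))); [lra | | |].
    - apply cont_on_opp, cont_on_plus; [apply (cont_on_subinterval g 0), Hc | apply HEc]; lra.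
    - intros s Hs. apply (is_derive_opp (fun r => g r + E r)).
      apply (is_derive_plus g E); [apply Hd; lra | apply HE].
    - intros s Hs. pose proof (Hbd s ltac:(lra)) as Hs'. apply Rabs_le_between in Hs'. lra. }
  destruct (completeness (fun v => exists r, 0 <= r /\ v = g r - E r)) as [l [Hub Hlub]].
  { exists (g 0 + E 0). intros v [r [Hr ->]].
    pose proof (Hupp 0 r ltac:(lra)). pose proof (HE0 r). lra. }
  { exists (g 0 - E 0), 0. split; [lra | reflexivity]. }
  exists l. apply is_lim_spec. intros eps. simpl. pose proof (cond_pos eps).
  assert (Hr0 : exists r0, 0 <= r0 /\ l - eps / 2 < g r0 - E r0).
  { apply NNPP. intros Hn. assert (l <= l - eps / 2); [|lra].
    apply Hlub. intros v [r [Hr ->]]. apply Rnot_lt_le. intros Hlt. apply Hn. exists r; auto. }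
  destruct Hr0 as [r0 [Hr0 Hr0']].
  assert (HBl : 0 <= B / lam) by (apply Rdiv_le_0_compat; lra).
  destruct (exp_decay_lt (B / lam) lam (eps / 2) HBl Hlam ltac:(lra)) as [M HM].
  exists (Rmax r0 (Rmax M 0)). intros t Ht.
  pose proof (Rmax_l r0 (Rmax M 0)). pose proof (Rmax_r r0 (Rmax M 0)).
  pose proof (Rmax_l M 0). pose proof (Rmax_r M 0).
  pose proof (Hlow r0 t ltac:(lra)). pose proof (HE0 t).
  assert (Ht0 : 0 <= t) by lra.
  pose proof (Hub (g t - E t) (ex_intro _ t (conj Ht0 eq_refl))).
  assert (E t < eps / 2) by (apply HM; lra).
  apply Rabs_lt_between. lra.
Qed.

Lemma ln_one_minus_div_decreasing g1 g2 : 0 < g1 -> g1 < g2 -> g2 < 1 ->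
  ln (1 - g2) / g2 < ln (1 - g1) / g1.
Proof.
  intros H1 H12 H2.
  set (dl := fun g => (- g / (1 - g) - ln (1 - g)) / (g * g)).
  assert (Hder : forall x, 0 < x < 1 -> is_derive (fun g => ln (1 - g) / g) x (dl x)).
  { intros x Hx. auto_derive; [lra |]. unfold dl. replace (1 + - x) with (1 - x) by ring. field. lra. }
  destruct (MVT_gen (fun g => ln (1 - g) / g) g1 g2 dl) as [c [Hc Hceq]].
  - intros x Hx. rewrite Rmin_left, Rmax_right in Hx by lra. apply Hder; lra.
  - intros x Hx. rewrite Rmin_left, Rmax_right in Hx by lra.
    eapply is_derive_continuity_pt, Hder; lra.
  - rewrite Rmin_left, Rmax_right in Hc by lra.
    assert (Hy : 1 < 1 / (1 - c)).
    { apply Rmult_lt_reg_r with (1 - c); [lra|]. field_simplify; lra. }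
    assert (Hln : ln (1 / (1 - c)) < 1 / (1 - c) - 1).
    { rewrite <- (ln_exp (1 / (1 - c) - 1)). apply ln_increasing; [lra|].
      pose proof (exp_ineq1 (1 / (1 - c) - 1) ltac:(lra)). lra. }
    assert (Hdc : dl c < 0).
    { unfold dl. apply Rdiv_neg_pos; [|nra].
      unfold Rdiv in Hln at 1. rewrite Rmult_1_l, ln_Rinv in Hln by lra.
      replace (- c / (1 - c)) with (- (1 / (1 - c) - 1)) by (field; lra). lra. }
    nra.
Qed.

(* Points of [R^2] are encoded as the [Compactness.Tn 2 R] tuples [(x, (t, tt))] used by
   [compactness_list]. *)
Definition max_over (g : R * (R * unit) -> R) (l : list (R * (R * unit))) :=
  List.fold_right (fun p acc => Rmax (g p) acc) 0 l.

Lemma max_over_ge g l p : List.In p l -> g p <= max_over g l.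
Proof.
  induction l as [|a l IH]; simpl; [tauto|]. intros [->|H].
  - apply Rmax_l.
  - eapply Rle_trans; [apply IH, H | apply Rmax_r].
Qed.

Lemma cont_within_Dclosed_bounded (u : R -> R -> R) T :
  (forall x t, Dclosed x t -> cont_within Dclosed u x t) ->
  exists M, 0 <= M /\ forall x t, 0 <= x <= 1 -> 0 <= t <= T -> Rabs (u x t) <= M.
Proof.
  intros Hc.
  assert (Hd : forall p : R * (R * unit), exists d : posreal,
     Dclosed (fst p) (fst (snd p)) -> forall y s, Dclosed y s -> Rabs (y - fst p) < d ->
        Rabs (s - fst (snd p)) < d -> Rabs (u y s - u (fst p) (fst (snd p))) < 1).
  { intros [a [b []]]. simpl. destruct (classic (Dclosed a b)) as [Hin|Hout].
    - destruct (Hc a b Hin 1 Rlt_0_1) as [d [Hd H]]. exists (mkposreal d Hd). intros _. exact H.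
    - exists (mkposreal 1 Rlt_0_1). intros H; tauto. }
  set (delta := fun p => proj1_sig (constructive_indefinite_description _ (Hd p))).
  assert (Hdelta : forall p, Dclosed (fst p) (fst (snd p)) -> forall y s, Dclosed y s ->
      Rabs (y - fst p) < delta p -> Rabs (s - fst (snd p)) < delta p ->
      Rabs (u y s - u (fst p) (fst (snd p))) < 1).
  { intros p. unfold delta. destruct (constructive_indefinite_description _ (Hd p)) as [d Hp]. exact Hp. }
  apply NNPP. intros Hn. apply (compactness_list 2 (0, (0, tt)) (1, (T, tt)) delta). intros [l Hl].
  apply Hn. set (g := fun p : R * (R * unit) => Rabs (u (fst p) (fst (snd p))) + 1).
  exists (max_over g l). split.
  { destruct l as [|p l]; simpl; [lra|]. eapply Rle_trans; [|apply Rmax_l].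
    unfold g. pose proof (Rabs_pos (u (fst p) (fst (snd p)))). lra. }
  intros x t Hx Ht. destruct (Hl (x, (t, tt))) as [[a [b []]] [Hin [Hb Hcl]]]; [simpl; tauto|].
  simpl in Hb, Hcl. assert (Hmax : Rabs (u a b) + 1 <= max_over g l) by exact (max_over_ge g l _ Hin).
  assert (Hu : Rabs (u x t - u a b) < 1).
  { apply (Hdelta (a, (b, tt))); unfold Dclosed; simpl; try tauto; lra. }
  replace (u x t) with ((u x t - u a b) + u a b) by ring.
  eapply Rle_trans; [apply Rabs_triang | lra].
Qed.

(* The flow of the characteristic equation [x' = sigma x (1 - x)] after time [r]. *)
Definition logistic (sigma r x : R) := x * exp (sigma * r) / (1 - x + x * exp (sigma * r)).
Definition jump (gamma x : R) := x + gamma * (1 - x).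

Lemma logistic_den_pos sigma r x : 0 <= x <= 1 -> 0 < 1 - x + x * exp (sigma * r).
Proof.
  intros Hx. pose proof (exp_pos (sigma * r)).
  destruct (Rle_lt_dec x 0); [assert (x = 0) by lra; subst; lra | nra].
Qed.

Lemma logistic_time0 sigma x : 0 <= x <= 1 -> logistic sigma 0 x = x.
Proof. intros. unfold logistic. rewrite Rmult_0_r, exp_0. field_simplify; lra. Qed.

Lemma logistic_at0 sigma r : logistic sigma r 0 = 0.
Proof. unfold logistic, Rdiv. rewrite !Rmult_0_l. reflexivity. Qed.

Lemma logistic_at1 sigma r : logistic sigma r 1 = 1.
Proof. unfold logistic. pose proof (exp_pos (sigma * r)). field. lra. Qed.

Lemma logistic_in sigma r x : 0 <= x <= 1 -> 0 <= logistic sigma r x <= 1.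
Proof.
  intros Hx. pose proof (logistic_den_pos sigma r x Hx). pose proof (exp_pos (sigma * r)).
  unfold logistic. split.
  - apply Rdiv_le_0_compat; nra.
  - apply Rmult_le_reg_r with (1 - x + x * exp (sigma * r)); [lra|].
    unfold Rdiv. rewrite Rmult_assoc, Rinv_l by lra. lra.
Qed.

Lemma logistic_lt1 sigma r x : 0 <= x < 1 -> logistic sigma r x < 1.
Proof.
  intros Hx. pose proof (logistic_den_pos sigma r x ltac:(lra)). pose proof (exp_pos (sigma * r)).
  unfold logistic. apply Rmult_lt_reg_r with (1 - x + x * exp (sigma * r)); [lra|].
  unfold Rdiv. rewrite Rmult_assoc, Rinv_l by lra. lra.
Qed.

Lemma logistic_gt0 sigma r x : 0 < x <= 1 -> 0 < logistic sigma r x.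
Proof.
  intros Hx. pose proof (logistic_den_pos sigma r x ltac:(lra)). pose proof (exp_pos (sigma * r)).
  unfold logistic. apply Rdiv_lt_0_compat; nra.
Qed.

Lemma logistic_mono sigma r x y : 0 <= x -> x <= y -> y <= 1 -> logistic sigma r x <= logistic sigma r y.
Proof.
  intros. pose proof (logistic_den_pos sigma r x ltac:(lra)).
  pose proof (logistic_den_pos sigma r y ltac:(lra)).
  pose proof (exp_pos (sigma * r)). unfold logistic.
  set (E := exp (sigma * r)) in *. set (D1 := 1 - x + x * E) in *. set (D2 := 1 - y + y * E) in *.
  unfold Rdiv. apply Rmult_le_reg_r with (D1 * D2); [nra|].
  replace (x * E * / D1 * (D1 * D2)) with (x * E * D2) by (field; lra).
  replace (y * E * / D2 * (D1 * D2)) with (y * E * D1) by (field; lra).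
  unfold D1, D2. nra.
Qed.

Lemma is_derive_logistic sigma T x s : 0 <= x <= 1 ->
  is_derive (fun r => logistic sigma (r - T) x) s
    (sigma * logistic sigma (s - T) x * (1 - logistic sigma (s - T) x)).
Proof.
  intros Hx. pose proof (logistic_den_pos sigma (s - T) x Hx). unfold logistic.
  auto_derive; replace (s + - T) with (s - T) by ring; [lra | field; lra].
Qed.

Lemma jump_in gamma x : 0 < gamma < 1 -> 0 <= x <= 1 -> 0 <= jump gamma x <= 1.
Proof. unfold jump. intros. nra. Qed.

Lemma jump_lt1 gamma x : 0 < gamma < 1 -> 0 <= x < 1 -> jump gamma x < 1.
Proof. unfold jump. intros. nra. Qed.

Lemma jump_mono gamma x y : 0 < gamma < 1 -> x <= y -> jump gamma x <= jump gamma y.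
Proof. unfold jump. intros. nra. Qed.

Lemma one_minus_jump gamma x : 1 - jump gamma x = (1 - gamma) * (1 - x).
Proof. unfold jump. ring. Qed.

Section Characteristics.
Variables (sigma f m gamma : R) (u : R -> R -> R).
Hypothesis Hsol : classical_solution sigma f m gamma u.

Lemma u_cont_along (X : R -> R) T : 0 <= T -> (forall r, continuity_pt X r) ->
  (forall r, 0 <= r <= T -> 0 <= X r <= 1) -> cont_on (fun r => u (X r) r) 0 T.
Proof.
  intros HT HXc HXin s. destruct Hsol as [_ [Hc _]].
  set (s' := clamp 0 T s). assert (Hs' : 0 <= s' <= T) by (apply clamp_in; lra).
  apply ball_continuity_pt. intros eps He.
  destruct (Hc (X s') s' (conj (HXin _ Hs') (proj1 Hs')) eps He) as [d1 [Hd1 H1]].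
  destruct (continuity_pt_ball X s' (HXc s') d1 Hd1) as [d2 [Hd2 H2]].
  exists (Rmin d1 d2). split; [apply Rmin_pos; lra|].
  intros y Hy. fold s'. set (y' := clamp 0 T y). assert (Hy' : 0 <= y' <= T) by (apply clamp_in; lra).
  assert (Hyy : Rabs (y' - s') < Rmin d1 d2)
    by (eapply Rle_lt_trans; [apply clamp_lipschitz; lra | exact Hy]).
  pose proof (Rmin_l d1 d2). pose proof (Rmin_r d1 d2).
  apply H1; [split; [apply HXin; auto | lra] | apply H2; lra | lra].
Qed.

Lemma u_cont_along_logistic T x : 0 <= T -> 0 <= x <= 1 ->
  cont_on (fun r => u (logistic sigma (r - T) x) r) 0 T.
Proof.
  intros HT Hx. apply u_cont_along; [exact HT | | intros r _; apply logistic_in, Hx].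
  intros r. eapply is_derive_continuity_pt, is_derive_logistic, Hx.
Qed.

Lemma u_at_boundary x t : (x = 0 \/ x = 1) -> 0 < t ->
  is_derive (fun s => u x s) t (m * f / gamma * (u (jump gamma x) t - u x t)).
Proof.
  intros Hx Ht. destruct Hsol as [_ [_ [ux [ut [_ [Hut [_ [_ Heq]]]]]]]].
  assert (Hpos : Dpos x t) by (split; [lra | exact Ht]).
  apply (is_derive_eq _ _ _ _ (Hut x t Hpos)).
  pose proof (Heq x t Hpos) as E. unfold jump. destruct Hx as [-> | ->]; rewrite <- E; ring.
Qed.

Lemma is_derive_u_logistic T x s : 0 <= x <= 1 -> 0 < s ->
  is_derive (fun r => u (logistic sigma (r - T) x) r) s
    (m * f / gamma * (u (jump gamma (logistic sigma (s - T) x)) s - u (logistic sigma (s - T) x) s)).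
Proof.
  intros Hx Hs.
  destruct (Req_dec x 0) as [-> | Hx0].
  { apply (is_derive_ext (fun r => u 0 r)); [intros t; rewrite logistic_at0; reflexivity|].
    rewrite logistic_at0. apply u_at_boundary; auto. }
  destruct (Req_dec x 1) as [-> | Hx1].
  { apply (is_derive_ext (fun r => u 1 r)); [intros t; rewrite logistic_at1; reflexivity|].
    rewrite logistic_at1. apply u_at_boundary; auto. }
  destruct Hsol as [_ [_ [ux [ut [Hux [Hut [Hcx [Hct Heq]]]]]]]].
  set (X := fun r => logistic sigma (r - T) x).
  assert (HX : 0 < X s < 1) by (split; [apply logistic_gt0 | apply logistic_lt1]; lra).
  set (dl := Rmin (Rmin (X s) (1 - X s)) s).
  assert (Hdl : 0 < dl) by (repeat apply Rmin_pos; lra).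
  assert (Hbox : forall y t, Rabs (y - X s) < dl -> Rabs (t - s) < dl -> 0 < y < 1 /\ 0 < t).
  { intros y t H1 H2.
    pose proof (Rmin_l (Rmin (X s) (1 - X s)) s). pose proof (Rmin_r (Rmin (X s) (1 - X s)) s).
    pose proof (Rmin_l (X s) (1 - X s)). pose proof (Rmin_r (X s) (1 - X s)). fold dl in H, H0.
    apply Rabs_def2 in H1. apply Rabs_def2 in H2. lra. }
  apply (is_derive_eq _ _ (ux (X s) s * (sigma * X s * (1 - X s)) + ut (X s) s)).
  - apply (is_derive_along u ux ut (X s) s dl); [| exact Hdl | | reflexivity | apply is_derive_logistic, Hx].
    + intros y t H1 H2. destruct (Hbox y t H1 H2). split; [apply Hux; lra | apply Hut; split; lra].
    + intros eps He.
      destruct (Hcx (X s) s ltac:(split; lra) eps He) as [d1 [Hd1 H1]].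
      destruct (Hct (X s) s ltac:(split; lra) eps He) as [d2 [Hd2 H2]].
      exists (Rmin dl (Rmin d1 d2)). split; [repeat apply Rmin_pos; lra|].
      intros y t Hy Ht.
      pose proof (Rmin_l dl (Rmin d1 d2)). pose proof (Rmin_r dl (Rmin d1 d2)).
      pose proof (Rmin_l d1 d2). pose proof (Rmin_r d1 d2).
      destruct (Hbox y t ltac:(lra) ltac:(lra)).
      split; [apply H1 | apply H2]; try split; lra.
  - pose proof (Heq (X s) s ltac:(split; lra)) as HE. change (logistic sigma (s - T) x) with (X s).
    unfold jump. rewrite <- HE. ring.
Qed.

Lemma u_at1 t : 0 <= t -> u 1 t = 1.
Proof.
  intros Ht. pose proof Hsol as [Hini _].
  assert (E : u (logistic sigma (0 - t) 1) 0 = u (logistic sigma (t - t) 1) t).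
  { apply (eq_of_is_derive_0 (fun r => u (logistic sigma (r - t) 1) r));
      [exact Ht | apply u_cont_along_logistic; lra |].
    intros s Hs. apply (is_derive_eq _ _ _ _ (is_derive_u_logistic t 1 s ltac:(lra) ltac:(lra))).
    rewrite logistic_at1. unfold jump. replace (1 + gamma * (1 - 1)) with 1 by ring. ring. }
  rewrite !logistic_at1, Hini in E by lra. auto.
Qed.

End Characteristics.

Lemma is_derive_pow_div_fact c n r :
  is_derive (fun r => (c * r) ^ S n / INR (Factorial.fact (S n))) r
    (c * ((c * r) ^ n / INR (Factorial.fact n))).
Proof.
  assert (INR (Factorial.fact n) <> 0) by apply INR_fact_neq_0.
  assert (INR (S n) <> 0) by (apply not_0_INR; lia).
  auto_derive; [exact I |].
  change (match n with 0%nat => 1 | S _ => INR n + 1 end) with (INR (S n)).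
  replace (Factorial.fact n + n * Factorial.fact n)%nat with (S n * Factorial.fact n)%nat by lia.
  rewrite mult_INR. field. split; assumption.
Qed.

(* Integrating [D' >= - c D - c K (c s)^n / n!] against the factor [e^(c s)] gains one
   more power of [c T]. *)
Lemma ge_neg_pow_fact_of_is_derive (D dD : R -> R) c K T n :
  0 < c -> 0 <= K -> 0 <= T -> cont_on D 0 T ->
  (forall s, 0 < s < T -> is_derive D s (dD s)) ->
  (forall s, 0 < s < T -> - c * K * ((c * s) ^ n / INR (Factorial.fact n)) - c * D s <= dD s) ->
  0 <= D 0 -> - K * ((c * T) ^ S n / INR (Factorial.fact (S n))) <= D T.
Proof.
  intros Hc HK HT HDc HD HdD HD0.
  set (Q := fun k r => (c * r) ^ k / INR (Factorial.fact k)).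
  assert (HQ : forall k r, 0 <= r -> 0 <= Q k r).
  { intros k r Hr. apply Rdiv_le_0_compat; [apply pow_le; nra | apply INR_fact_lt_0]. }
  pose proof (exp_pos (c * T)).
  assert (Hmono : exp (c * 0) * D 0 + K * exp (c * T) * Q (S n) 0
               <= exp (c * T) * D T + K * exp (c * T) * Q (S n) T).
  { apply (le_of_is_derive_nonneg (fun r => exp (c * r) * D r + K * exp (c * T) * Q (S n) r)
      (fun r => c * exp (c * r) * D r + exp (c * r) * dD r + K * exp (c * T) * (c * Q n r)));
      [exact HT | | |].
    - apply cont_on_plus; [apply cont_on_mult; [|exact HDc] | ];
        apply cont_on_of_continuity_pt; try exact HT; intros s _.
      + apply (is_derive_continuity_pt (fun r => exp (c * r)) s (c * exp (c * s))).
        auto_derive; [auto | ring].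
      + eapply is_derive_continuity_pt, is_derive_scal, is_derive_pow_div_fact.
    - intros s Hs. apply (is_derive_plus (fun r => exp (c * r) * D r)).
      + apply (is_derive_eq _ _ _ _ (is_derive_Rmult (fun r => exp (c * r)) D s _ _
          ltac:(auto_derive; auto) (HD s Hs))).
        ring.
      + apply (is_derive_scal (fun r => Q (S n) r)), is_derive_pow_div_fact.
    - intros s Hs.
      assert (exp (c * s) <= exp (c * T)) by (apply exp_le_mono; nra).
      pose proof (exp_pos (c * s)). pose proof (HQ n s ltac:(lra)). pose proof (HdD s Hs).
      assert (0 <= K * c * Q n s * (exp (c * T) - exp (c * s)))
        by (apply Rmult_le_pos; [apply Rmult_le_pos; [nra | lra] | lra]).
      unfold Q in *. nra. }
  assert (HQ0 : Q (S n) 0 = 0) by (unfold Q; rewrite Rmult_0_r, pow_i by lia; apply Rdiv_0_l).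
  rewrite HQ0, Rmult_0_r, exp_0 in Hmono. unfold Q in Hmono.
  apply Rmult_le_reg_l with (exp (c * T)); [lra|]. nra.
Qed.

Lemma nonneg_of_ge_neg_pow_fact K x a : 0 <= K ->
  (forall n, - K * (x ^ n / INR (Factorial.fact n)) <= a) -> 0 <= a.
Proof.
  intros HK H. apply Rnot_lt_le. intros Ha.
  assert (Hp : 0 < - a / (K + 1)) by (apply Rdiv_lt_0_compat; lra).
  destruct (cv_speed_pow_fact x _ Hp) as [N HN].
  specialize (HN N (Nat.le_refl N)). unfold R_dist in HN. rewrite Rminus_0_r in HN.
  apply Rabs_def2 in HN. destruct HN as [HN _].
  pose proof (H N).
  assert (- a / (K + 1) * (K + 1) = - a) by (field; lra).
  assert (K * (x ^ N / INR (Factorial.fact N)) <= K * (- a / (K + 1))) by (apply Rmult_le_compat_l; lra).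
  nra.
Qed.

Section Comparison.
Variables (sigma f m gamma : R) (u : R -> R -> R).
Hypothesis Hc : 0 < m * f / gamma.
Hypothesis Hsol : classical_solution sigma f m gamma u.

(* [Sd] is a set of pairs invariant under the backward characteristic flow and the jump;
   [F] dominates [e (u y - u x)] at [t = 0] and is a supersolution of the equation that
   [u y - u x] satisfies along characteristics. *)
Variables (Sd : R -> R -> Prop) (F : R -> R -> R -> R) (dF : R -> R -> R -> R -> R) (e : R).
Hypothesis He : -1 <= e <= 1.
Hypothesis HSd_in : forall x y, Sd x y -> 0 <= x <= 1 /\ 0 <= y <= 1.
Hypothesis HSd_logistic : forall x y r, Sd x y -> r <= 0 -> Sd (logistic sigma r x) (logistic sigma r y).
Hypothesis HSd_jump : forall x y, Sd x y -> Sd (jump gamma x) (jump gamma y).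
Hypothesis HF_nonneg : forall x y s, Sd x y -> 0 <= s -> 0 <= F x y s.
Hypothesis HF_init : forall x y, Sd x y -> e * (y - x) <= F x y 0.
Hypothesis HdF : forall x y T s, Sd x y -> 0 <= s <= T ->
  is_derive (fun r => F (logistic sigma (r - T) x) (logistic sigma (r - T) y) r) s (dF x y T s).
Hypothesis HF_super : forall x y T s, Sd x y -> 0 < s < T ->
  m * f / gamma * (F (jump gamma (logistic sigma (s - T) x)) (jump gamma (logistic sigma (s - T) y)) s
                   - F (logistic sigma (s - T) x) (logistic sigma (s - T) y) s) <= dF x y T s.

Let c := m * f / gamma.
Let flow T x r := logistic sigma (r - T) x.
Let defect x y s := F x y s - e * (u y s - u x s).

Lemma defect_init x y : Sd x y -> 0 <= defect x y 0.
Proof.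
  intros Hxy. pose proof Hsol as [Hini _]. destruct (HSd_in x y Hxy).
  unfold defect. rewrite !Hini by assumption. pose proof (HF_init x y Hxy). lra.
Qed.

Lemma cont_on_defect_flow x y T : Sd x y -> 0 <= T ->
  cont_on (fun r => defect (flow T x r) (flow T y r) r) 0 T.
Proof.
  intros Hxy HT. destruct (HSd_in x y Hxy).
  apply cont_on_minus; [| apply cont_on_mult; [apply cont_on_const | apply cont_on_minus]].
  - apply cont_on_of_continuity_pt; [exact HT|]. intros s Hs. eapply is_derive_continuity_pt, HdF; eauto.
  - apply (u_cont_along_logistic sigma f m gamma u Hsol); assumption.
  - apply (u_cont_along_logistic sigma f m gamma u Hsol); assumption.
Qed.

Lemma is_derive_defect_flow x y T s : Sd x y -> 0 < s < T ->
  is_derive (fun r => defect (flow T x r) (flow T y r) r) s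
    (dF x y T s - e * (c * (u (jump gamma (flow T y s)) s - u (flow T y s) s)
                      - c * (u (jump gamma (flow T x s)) s - u (flow T x s) s))).
Proof.
  intros Hxy Hs. destruct (HSd_in x y Hxy).
  apply (is_derive_minus (fun r => F (flow T x r) (flow T y r) r)); [apply HdF; auto; lra |].
  apply (is_derive_scal (fun r => u (flow T y r) r - u (flow T x r) r)).
  apply (is_derive_minus (fun r => u (flow T y r) r));
    apply (is_derive_u_logistic sigma f m gamma u Hsol); auto; lra.
Qed.

Lemma defect_lower_bound t0 M : (forall x t, 0 <= x <= 1 -> 0 <= t <= t0 -> Rabs (u x t) <= M) ->
  forall n x y T, Sd x y -> 0 <= T <= t0 ->
    - (2 * M) * ((c * T) ^ n / INR (Factorial.fact n)) <= defect x y T.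
Proof.
  intros HM n. induction n as [|n IH]; intros x y T Hxy HT; destruct (HSd_in x y Hxy).
  - simpl. unfold defect. pose proof (HF_nonneg x y T Hxy ltac:(lra)).
    pose proof (HM x T ltac:(lra) ltac:(lra)). pose proof (HM y T ltac:(lra) ltac:(lra)).
    assert (Rabs (e * (u y T - u x T)) <= 2 * M).
    { rewrite Rabs_mult. assert (Rabs e <= 1) by (apply Rabs_le; lra).
      assert (Rabs (u y T - u x T) <= 2 * M).
      { unfold Rminus. eapply Rle_trans; [apply Rabs_triang | rewrite Rabs_Ropp; lra]. }
      apply Rle_trans with (1 * (2 * M)); [apply Rmult_le_compat; try apply Rabs_pos; lra | lra]. }
    apply Rabs_le_between in H4. lra.
  - replace (defect x y T) with (defect (flow T x T) (flow T y T) T)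
      by (unfold flow; rewrite Rminus_diag, !logistic_time0; auto).
    apply (ge_neg_pow_fact_of_is_derive (fun r => defect (flow T x r) (flow T y r) r)
      (fun s => dF x y T s - e * (c * (u (jump gamma (flow T y s)) s - u (flow T y s) s)
                                  - c * (u (jump gamma (flow T x s)) s - u (flow T x s) s)))
      c (2 * M) T n); [exact Hc | | lra | | | |].
    + pose proof (HM 0 0 ltac:(lra) ltac:(lra)). pose proof (Rabs_pos (u 0 0)). lra.
    + apply cont_on_defect_flow; [exact Hxy | lra].
    + intros s Hs. apply is_derive_defect_flow; assumption.
    + intros s Hs.
      assert (HJ : Sd (jump gamma (flow T x s)) (jump gamma (flow T y s)))
        by (apply HSd_jump, HSd_logistic; [exact Hxy | lra]).
      pose proof (IH _ _ s HJ ltac:(lra)) as IHs.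
      pose proof (HF_super x y T s Hxy Hs) as Hsup. fold c in Hsup.
      apply (Rmult_le_compat_l c) in IHs; [| exact (Rlt_le _ _ Hc)].
      unfold defect in IHs |- *. unfold flow in *. lra.
    + apply defect_init, HSd_logistic; [exact Hxy | lra].
Qed.

Lemma comparison x y t : Sd x y -> 0 <= t -> e * (u y t - u x t) <= F x y t.
Proof.
  intros Hxy Ht. pose proof Hsol as [_ [Hcont _]].
  destruct (cont_within_Dclosed_bounded u t Hcont) as [M [HM HMb]].
  assert (0 <= defect x y t); [|unfold defect in *; lra].
  apply (nonneg_of_ge_neg_pow_fact (2 * M) (c * t)); [lra|].
  intros n. apply (defect_lower_bound t M HMb n x y t Hxy); lra.
Qed.

End Comparison.

(* With [L = ln (1 - gamma)], [exp (p L) = (1 - gamma)^p] is the factor by which the jump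
   multiplies [(1 - x)^p]. *)
Definition power_rate (sigma c L p : R) := sigma * p + c * (exp (p * L) - 1).

Lemma power_rate_neg sigma c L : sigma + c * L <> 0 ->
  exists p, -1 < p < 1 /\ p * (sigma + c * L) < 0 /\ power_rate sigma c L p < 0.
Proof.
  intros Hne.
  apply is_derive_root_neg_value; [| unfold power_rate; rewrite Rmult_0_l, exp_0; ring | exact Hne].
  unfold power_rate. auto_derive; [auto | rewrite Rmult_0_l, exp_0; ring].
Qed.

Lemma exp_mul_ln_one_minus_jump p gamma w : 0 < gamma < 1 -> w < 1 ->
  exp (p * ln (1 - jump gamma w)) = exp (p * ln (1 - gamma)) * exp (p * ln (1 - w)).
Proof. intros. rewrite one_minus_jump, ln_mult, Rmult_plus_distr_l, exp_plus by lra. reflexivity. Qed.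

Lemma is_derive_power_flow p sigma T x s : 0 <= x < 1 ->
  is_derive (fun r => exp (p * ln (1 - logistic sigma (r - T) x))) s
    (- p * sigma * logistic sigma (s - T) x * exp (p * ln (1 - logistic sigma (s - T) x))).
Proof.
  intros Hx. set (X := logistic sigma (s - T) x).
  assert (HX : X < 1) by apply logistic_lt1, Hx.
  assert (HW : is_derive (fun w => exp (p * ln (1 - w))) X (- p / (1 - X) * exp (p * ln (1 - X)))).
  { auto_derive; replace (1 + - X) with (1 - X) by ring; [lra | field; lra]. }
  assert (Hx' : 0 <= x <= 1) by lra.
  apply (is_derive_eq _ _ _ _ (is_derive_comp (fun w => exp (p * ln (1 - w)))
    (fun r => logistic sigma (r - T) x)
    s _ _ HW (is_derive_logistic sigma T x s Hx'))).
  fold X. change (scal ?a ?b) with (a * b). field. lra.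
Qed.

Section ConvergenceToOne.
Variables (sigma f m gamma : R) (u : R -> R -> R).
Hypothesis Hsigma : 0 < sigma.
Hypothesis Hg : 0 < gamma < 1.
Hypothesis Hc : 0 < m * f / gamma.
Hypothesis Hsol : classical_solution sigma f m gamma u.
Variable p : R.
Hypothesis Hp : 0 < p < 1.

Let lam := - power_rate sigma (m * f / gamma) (ln (1 - gamma)) p.
Let W w := exp (p * ln (1 - w)).

Lemma one_minus_u_bound x t : 0 <= x < 1 -> 0 <= t -> Rabs (1 - u x t) <= exp (- lam * t) * W x.
Proof.
  intros Hx Ht. rewrite <- (u_at1 sigma f m gamma u Hsol t Ht).
  assert (Hcomp : forall e, -1 <= e <= 1 -> e * (u 1 t - u x t) <= exp (- lam * t) * W x).
  2:{ apply Rabs_le. pose proof (Hcomp 1). pose proof (Hcomp (-1)). lra. }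
  intros e He.
  apply (comparison sigma f m gamma u Hc Hsol (fun x y => 0 <= x < 1 /\ y = 1)
    (fun x y s => exp (- lam * s) * W x)
    (fun x y T s => - lam * exp (- lam * s) * W (logistic sigma (s - T) x)
                    + exp (- lam * s) * (- p * sigma * logistic sigma (s - T) x
                                         * W (logistic sigma (s - T) x))) e He);
    [ | | | | | | | split; [exact Hx | reflexivity] | exact Ht].
  - intros x0 y0 [H1 ->]. lra.
  - intros x0 y0 r [H1 ->] _. rewrite logistic_at1. split; [|reflexivity].
    split; [apply logistic_in | apply logistic_lt1]; lra.
  - intros x0 y0 [H1 ->]. split; [split; [apply jump_in | apply jump_lt1]; lra | unfold jump; ring].
  - intros x0 y0 s _ _. unfold W.
    pose proof (exp_pos (- lam * s)). pose proof (exp_pos (p * ln (1 - x0))). nra.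
  - intros x0 y0 [H1 ->]. rewrite Rmult_0_r, exp_0, Rmult_1_l. unfold W.
    assert (1 - x0 <= exp (p * ln (1 - x0))).
    { rewrite <- (exp_ln (1 - x0)) at 1 by lra. apply exp_le_mono.
      assert (ln (1 - x0) <= 0) by (rewrite <- ln_1; apply ln_le; lra). nra. }
    pose proof (exp_pos (p * ln (1 - x0))). destruct (Rle_lt_dec 0 e); nra.
  - intros x0 y0 T s [H1 ->] Hs.
    apply (is_derive_Rmult (fun r => exp (- lam * r)) (fun r => W (logistic sigma (r - T) x0)));
      [auto_derive; [auto | ring] | apply is_derive_power_flow; lra].
  - intros x0 y0 T s [H1 ->] Hs. cbv beta. unfold W.
    set (X := logistic sigma (s - T) x0).
    assert (HX : 0 <= X < 1) by (split; [apply logistic_in | apply logistic_lt1]; lra).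
    rewrite exp_mul_ln_one_minus_jump by lra.
    pose proof (exp_pos (- lam * s)). pose proof (exp_pos (p * ln (1 - X))).
    assert (0 <= exp (- lam * s) * exp (p * ln (1 - X)) * (p * sigma * (1 - X))).
    { apply Rmult_le_pos; [apply Rmult_le_pos; lra | apply Rmult_le_pos; nra]. }
    assert (Hl : - lam = sigma * p + m * f / gamma * (exp (p * ln (1 - gamma)) - 1))
      by (unfold lam, power_rate; ring).
    set (E1 := exp (- lam * s)) in *. rewrite Hl. nra.
Qed.

End ConvergenceToOne.

Lemma u_converges_to_one sigma f m gamma u : 0 < sigma -> 0 < gamma < 1 -> 0 < m * f / gamma ->
  classical_solution sigma f m gamma u -> sigma + m * f / gamma * ln (1 - gamma) < 0 ->
  forall x, 0 <= x < 1 -> is_lim (fun t => u x t) p_infty 1.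
Proof.
  intros Hs Hg Hc Hsol Hneg x Hx.
  destruct (power_rate_neg sigma (m * f / gamma) (ln (1 - gamma))) as [p [Hp [Hsign Hrate]]]; [lra|].
  apply (is_lim_of_exp_bound _ 1 (exp (p * ln (1 - x)))
    (- power_rate sigma (m * f / gamma) (ln (1 - gamma)) p));
    [apply Rlt_le, exp_pos | lra |].
  intros t Ht. rewrite <- Rabs_Ropp, Rmult_comm. replace (- (u x t - 1)) with (1 - u x t) by ring.
  apply (one_minus_u_bound sigma f m gamma u Hs Hg Hc Hsol p); [nra | exact Hx | exact Ht].
Qed.

Section Oscillation.
Variables (sigma f m gamma : R) (u : R -> R -> R).
Hypothesis Hsigma : 0 < sigma.
Hypothesis Hg : 0 < gamma < 1.
Hypothesis Hc : 0 < m * f / gamma.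
Hypothesis Hsol : classical_solution sigma f m gamma u.
Variable a : R.
Hypothesis Ha : -1 < a < 0.

Let lam := - power_rate sigma (m * f / gamma) (ln (1 - gamma)) a.
Let Z w := exp (a * ln (1 - w)).
Let H w := Z w / - a.

Lemma is_derive_potential w : w < 1 -> is_derive H w (Z w / (1 - w)).
Proof.
  intros Hw. unfold H, Z. auto_derive; replace (1 + - w) with (1 - w) by ring; [lra | field; lra].
Qed.

Lemma potential_mono x y : x <= y < 1 -> H x <= H y.
Proof.
  intros Hxy. unfold H, Z, Rdiv. apply Rmult_le_compat_r; [apply Rlt_le, Rinv_0_lt_compat; lra |].
  apply exp_le_mono. assert (ln (1 - y) <= ln (1 - x)) by (apply ln_le; lra). nra.
Qed.

Lemma potential_sub_ge x y : 0 <= x <= y -> y < 1 -> y - x <= H y - H x.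
Proof.
  intros Hxy Hy.
  assert (Hd : forall w, w < 1 -> is_derive (fun w => H w - w) w (Z w / (1 - w) - 1)).
  { intros w Hw. apply (is_derive_minus H (fun w => w));
      [apply is_derive_potential, Hw | apply (is_derive_id (K := R_AbsRing))]. }
  enough (H x - x <= H y - y) by lra.
  apply (le_of_is_derive_nonneg (fun w => H w - w) (fun w => Z w / (1 - w) - 1)); [lra | | |].
  - apply cont_on_of_continuity_pt; [lra|]. intros s Hs. eapply is_derive_continuity_pt, Hd; lra.
  - intros s Hs. apply Hd; lra.
  - intros s Hs. assert (1 <= Z s / (1 - s)); [|lra].
    apply Rmult_le_reg_r with (1 - s); [lra|].
    unfold Rdiv. rewrite Rmult_assoc, Rinv_l, Rmult_1_r, Rmult_1_l by lra.
    unfold Z. rewrite <- (exp_ln (1 - s)) at 1 by lra. apply exp_le_mono.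
    assert (ln (1 - s) <= 0) by (rewrite <- ln_1; apply ln_le; lra). nra.
Qed.

Lemma one_minus_mul_power_anti x y : x <= y < 1 -> (1 - y) * Z y <= (1 - x) * Z x.
Proof.
  intros Hxy. unfold Z.
  rewrite <- (exp_ln (1 - y)) at 1 by lra. rewrite <- (exp_ln (1 - x)) at 1 by lra.
  rewrite <- !exp_plus. apply exp_le_mono.
  assert (ln (1 - y) <= ln (1 - x)) by (apply ln_le; lra). nra.
Qed.

Lemma potential_jump w : w < 1 -> H (jump gamma w) = exp (a * ln (1 - gamma)) * H w.
Proof. intros Hw. unfold H, Z. rewrite exp_mul_ln_one_minus_jump by lra. field. lra. Qed.

Lemma u_oscillation_bound x y t : 0 <= x <= y /\ y < 1 -> 0 <= t ->
  Rabs (u y t - u x t) <= exp (- lam * t) * (H y - H x).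
Proof.
  intros Hxy Ht.
  assert (Hcomp : forall e, -1 <= e <= 1 -> e * (u y t - u x t) <= exp (- lam * t) * (H y - H x)).
  2:{ apply Rabs_le. pose proof (Hcomp 1). pose proof (Hcomp (-1)). lra. }
  intros e He.
  apply (comparison sigma f m gamma u Hc Hsol (fun x y => 0 <= x <= y /\ y < 1)
    (fun x y s => exp (- lam * s) * (H y - H x))
    (fun x y T s => - lam * exp (- lam * s) * (H (logistic sigma (s - T) y) - H (logistic sigma (s - T) x))
        + exp (- lam * s) * (sigma * logistic sigma (s - T) y * Z (logistic sigma (s - T) y)
                             - sigma * logistic sigma (s - T) x * Z (logistic sigma (s - T) x))) e He);
    [ | | | | | | | exact Hxy | exact Ht].
  - intros x0 y0 H0. lra.
  - intros x0 y0 r H0 _. split; [split; [apply logistic_in | apply logistic_mono] | apply logistic_lt1]; lra.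
  - intros x0 y0 H0. split; [split; [apply jump_in | apply jump_mono] | apply jump_lt1]; lra.
  - intros x0 y0 s H0 _. pose proof (exp_pos (- lam * s)). pose proof (potential_mono x0 y0 ltac:(lra)). nra.
  - intros x0 y0 H0. rewrite Rmult_0_r, exp_0, Rmult_1_l.
    pose proof (potential_sub_ge x0 y0 ltac:(lra) ltac:(lra)). destruct (Rle_lt_dec 0 e); nra.
  - intros x0 y0 T s H0 Hs.
    set (X := logistic sigma (s - T) x0). set (Y := logistic sigma (s - T) y0).
    assert (HX : X < 1) by (apply logistic_lt1; lra).
    assert (HY : Y < 1) by (apply logistic_lt1; lra).
    assert (Hflow : forall z, 0 <= z < 1 -> logistic sigma (s - T) z < 1 ->
      is_derive (fun r => H (logistic sigma (r - T) z)) s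
        (sigma * logistic sigma (s - T) z * Z (logistic sigma (s - T) z))).
    { intros z Hz Hz1. apply (is_derive_eq _ _ _ _ (is_derive_comp H (fun r => logistic sigma (r - T) z) s _ _
        (is_derive_potential _ Hz1) (is_derive_logistic sigma T z s ltac:(lra)))).
      change (scal ?a ?b) with (a * b). field. lra. }
    apply (is_derive_eq _ _ _ _ (is_derive_Rmult (fun r => exp (- lam * r))
      (fun r => H (logistic sigma (r - T) y0) - H (logistic sigma (r - T) x0)) s _ _
      ltac:(auto_derive; [auto | reflexivity])
      (is_derive_minus _ _ s _ _ (Hflow y0 ltac:(lra) HY) (Hflow x0 ltac:(lra) HX)))).
    change (minus ?a ?b) with (a - b). fold X Y. ring.
  - intros x0 y0 T s H0 Hs. cbv beta.
    set (X := logistic sigma (s - T) x0). set (Y := logistic sigma (s - T) y0).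
    assert (HX : 0 <= X < 1) by (split; [apply logistic_in | apply logistic_lt1]; lra).
    assert (HY : X <= Y < 1) by (split; [apply logistic_mono | apply logistic_lt1]; lra).
    rewrite !potential_jump by lra.
    pose proof (one_minus_mul_power_anti X Y HY).
    pose proof (exp_pos (- lam * s)).
    assert (0 <= exp (- lam * s) * sigma * ((1 - X) * Z X - (1 - Y) * Z Y))
      by (apply Rmult_le_pos; [apply Rmult_le_pos|]; lra).
    assert (Hl : - lam = sigma * a + m * f / gamma * (exp (a * ln (1 - gamma)) - 1))
      by (unfold lam, power_rate; ring).
    set (E1 := exp (- lam * s)) in *.
    match goal with |- ?lhs <= ?rhs =>
      enough (Heq : rhs - lhs = E1 * sigma * ((1 - X) * Z X - (1 - Y) * Z Y)) by lra end.
    rewrite Hl. unfold H. field. lra.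
Qed.

End Oscillation.

Lemma u_converges sigma f m gamma u : 0 < sigma -> 0 < gamma < 1 -> 0 < m * f / gamma ->
  classical_solution sigma f m gamma u -> 0 < sigma + m * f / gamma * ln (1 - gamma) ->
  exists l : R, forall x, 0 <= x < 1 -> is_lim (fun t => u x t) p_infty l.
Proof.
  intros Hs Hg Hc Hsol Hpos.
  destruct (power_rate_neg sigma (m * f / gamma) (ln (1 - gamma))) as [a [Ha [Hsign Hrate]]]; [lra|].
  assert (Ha' : -1 < a < 0) by nra.
  set (lam := - power_rate sigma (m * f / gamma) (ln (1 - gamma)) a).
  assert (Hlam : 0 < lam) by (unfold lam; lra).
  set (H := fun w => exp (a * ln (1 - w)) / - a).
  pose proof (u_oscillation_bound sigma f m gamma u Hs Hg Hc Hsol a Ha') as Hosc.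
  destruct (is_lim_of_deriv_exp_bound (fun r => u 0 r) (fun r => m * f / gamma * (u gamma r - u 0 r))
    (m * f / gamma * (H gamma - H 0)) lam) as [l Hl].
  - pose proof (potential_mono a Ha' 0 gamma ltac:(lra)). unfold H. apply Rmult_le_pos; lra.
  - exact Hlam.
  - intros b Hb. apply (u_cont_along sigma f m gamma u Hsol (fun _ => 0) b Hb); [|intros; lra].
    intros r. apply continuity_pt_const. intros ? ?; reflexivity.
  - intros r Hr. replace gamma with (jump gamma 0) at 2 by (unfold jump; ring).
    apply (u_at_boundary sigma f m gamma u Hsol); auto.
  - intros r Hr. rewrite Rabs_mult, (Rabs_pos_eq (m * f / gamma)) by lra.
    rewrite Rmult_assoc, (Rmult_comm (H gamma - H 0)).
    apply Rmult_le_compat_l; [lra | apply Hosc; lra].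
  - exists l. intros x Hx. rewrite <- (Rplus_0_r l).
    apply (is_lim_ext (fun t => u 0 t + (u x t - u 0 t))); [intros; ring|].
    apply is_lim_plus'; [exact Hl|].
    apply (is_lim_of_exp_bound _ 0 (H x - H 0) lam); [| exact Hlam |].
    { pose proof (potential_mono a Ha' 0 x ltac:(lra)). unfold H. lra. }
    intros t Ht. rewrite Rminus_0_r, Rmult_comm. apply Hosc; lra.
Qed.

Theorem proposition4p11 (sigma f m : R)
  (Hsigma : 0 < sigma) (Hf : 0 < f) (Hm : 0 < m) (Hsmf : m * f < sigma)
  (gstar : R) (Hgstar : 0 < gstar < 1)
  (Hgstar_eq : sigma * gstar + m * f * ln (1 - gstar) = 0)
  (gamma : R) (Hgamma : 0 < gamma < 1) (Hne : gamma <> gstar)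
  (u : R -> R -> R) (Hu : classical_solution sigma f m gamma u) :
  exists ubar : R, forall x : R, 0 <= x < 1 ->
    is_lim (fun t => u x t) p_infty ubar.
Proof.
  assert (Hmf : 0 < m * f) by nra.
  assert (Hc : 0 < m * f / gamma) by (apply Rdiv_lt_0_compat; lra).
  assert (Hstar : sigma + m * f * (ln (1 - gstar) / gstar) = 0).
  { replace (sigma + m * f * (ln (1 - gstar) / gstar))
      with ((sigma * gstar + m * f * ln (1 - gstar)) / gstar) by (field; lra).
    rewrite Hgstar_eq. field. lra. }
  destruct (Rlt_or_le gamma gstar) as [Hlt | Hle].
  - apply (u_converges sigma f m gamma u Hsigma Hgamma Hc Hu).
    replace (m * f / gamma * ln (1 - gamma)) with (m * f * (ln (1 - gamma) / gamma)) by (field; lra).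
    pose proof (ln_one_minus_div_decreasing gamma gstar ltac:(lra) Hlt ltac:(lra)). nra.
  - exists 1. apply (u_converges_to_one sigma f m gamma u Hsigma Hgamma Hc Hu).
    replace (m * f / gamma * ln (1 - gamma)) with (m * f * (ln (1 - gamma) / gamma)) by (field; lra).
    assert (Hgt : gstar < gamma) by lra.
    pose proof (ln_one_minus_div_decreasing gstar gamma ltac:(lra) Hgt ltac:(lra)). nra.
Qed.
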